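(* Let $\mathbf{C}$ and $\mathbf{D}$ be categories and let $F : \mathrm{Ob}(\mathbf{D}) \rightleftarrows \mathrm{Ob}(\mathbf{C}) : G$ be a pre-adjunction between $\mathbf{C}$ and $\mathbf{D}$, with family of maps $\Phi_{\mathcal{Y},\mathcal{X}} : \hom_\mathbf{C}(F(\mathcal{Y}), \mathcal{X}) \to \hom_\mathbf{D}(\mathcal{Y}, G(\mathcal{X}))$. If $\mathbf{C}$ has the Ramsey property, then $\mathbf{D}$ has the Ramsey property.
   Context: For a category $\mathbf{C}$, an integer $k\ge 2$ and objects $\mathcal{A},\mathcal{B},\mathcal{C}$, write $\mathcal{C}\longrightarrow(\mathcal{B})^{\mathcal{A}}_k$ if for every partition $\hom_\mathbf{C}(\mathcal{A},\mathcal{C})=\Sigma_1\cup\dots\cup\Sigma_k$ into pairwise disjoint sets there are $i\in\{1,\dots,k\}$ and $w\in\hom_\mathbf{C}(\mathcal{B},\mathcal{C})$ with $w\cdot\hom_\mathbf{C}(\mathcal{A},\mathcal{B})\subseteq\Sigma_i$. A category $\mathbf{C}$ has the Ramsey property if for every integer $k\ge2$ and all objects $\mathcal{A},\mathcal{B}$ with $\hom_\mathbf{C}(\mathcal{A},\mathcal{B})\neq\varnothing$ there is an object $\mathcal{C}$ with $\mathcal{C}\longrightarrow(\mathcal{B})^{\mathcal{A}}_k$. A pre-adjunction between categories $\mathbf{C}$ and $\mathbf{D}$ is a pair of maps (not necessarily functors) $F:\mathrm{Ob}(\mathbf{D})\to\mathrm{Ob}(\mathbf{C})$ and $G:\mathrm{Ob}(\mathbf{C})\to\mathrm{Ob}(\mathbf{D})$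 together with a family of maps (not necessarily natural or bijective) $\Phi_{\mathcal{Y},\mathcal{X}}:\hom_\mathbf{C}(F(\mathcal{Y}),\mathcal{X})\to\hom_\mathbf{D}(\mathcal{Y},G(\mathcal{X}))$, indexed by all pairs $(\mathcal{Y},\mathcal{X})\in\mathrm{Ob}(\mathbf{D})\times\mathrm{Ob}(\mathbf{C})$ with $\hom_\mathbf{C}(F(\mathcal{Y}),\mathcal{X})\ne\varnothing$, satisfying: (PA) for every $\mathcal{C}\in\mathrm{Ob}(\mathbf{C})$, all $\mathcal{D},\mathcal{E}\in\mathrm{Ob}(\mathbf{D})$, every $u\in\hom_\mathbf{C}(F(\mathcal{D}),\mathcal{C})$ and every $f\in\hom_\mathbf{D}(\mathcal{E},\mathcal{D})$ there is $v\in\hom_\mathbf{C}(F(\mathcal{E}),F(\mathcal{D}))$ with $\Phi_{\mathcal{D},\mathcal{C}}(u)\cdot f=\Phi_{\mathcal{E},\mathcal{C}}(u\cdot v)$. *)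

Set Universe Polymorphism.

Record Category := {
  Ob :> Type;
  Hom : Ob -> Ob -> Type;
  comp : forall {A B C : Ob}, Hom B C -> Hom A B -> Hom A C;
  idm : forall A : Ob, Hom A A;
  comp_assoc : forall (A B C D : Ob) (h : Hom C D) (g : Hom B C) (f : Hom A B),
      comp h (comp g f) = comp (comp h g) f;
  comp_id_l : forall (A B : Ob) (f : Hom A B), comp (idm B) f = f;
  comp_id_r : forall (A B : Ob) (f : Hom A B), comp f (idm A) = f
}.

Arguments Hom {c} _ _.
Arguments comp {c A B C} _ _.
Arguments idm {c} _.

(* C --> (B)^A_k : every k-colouring (= partition of hom(A,C) into k pairwise
   disjoint, possibly empty, classes) of hom(A,C) admits i < k and w : B -> C
   with w . hom(A,B) contained in class i. *)
Definition arrows (Cat : Category) (k : nat) (A B C : Cat) : Prop :=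
  forall chi : Hom A C -> nat,
    (forall f, chi f < k) ->
    exists i, i < k /\ exists w : Hom B C, forall f : Hom A B, chi (comp w f) = i.

Definition RamseyProperty (Cat : Category) : Prop :=
  forall (k : nat), 2 <= k -> forall A B : Cat, inhabited (Hom A B) ->
    exists C : Cat, arrows Cat k A B C.

(* Pre-adjunction: F, G object maps; Phi a family of maps (no naturality or
   bijectivity); condition (PA). Phi is given on all pairs; on pairs with empty
   hom(F Y, X) it is the (unique) empty function, so this is equivalent. *)
Record PreAdjunction (C D : Category) := {
  paF : Ob D -> Ob C;
  paG : Ob C -> Ob D;
  paPhi : forall (Y : Ob D) (X : Ob C), Hom (paF Y) X -> Hom Y (paG X);
  paPA : forall (X : Ob C) (Dd E : Ob D) (u : Hom (paF Dd) X) (f : Hom E Dd),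
      exists v : Hom (paF E) (paF Dd),
        comp (paPhi Dd X u) f = paPhi E X (comp u v)
}.


(* A colouring of hom(A, G X) pulls back along Phi to a colouring of
   hom(F A, X); a monochromatic copy w of F B in X is pushed forward to
   Phi w, and (PA) rewrites every Phi w . f as Phi (w . v), whose colour is
   the colour of w . v. *)

Section PreAdjunctionRamsey.

Variables (C D : Category) (P : PreAdjunction C D).

Local Notation F := (paF C D P).
Local Notation G := (paG C D P).
Local Notation Phi := (paPhi C D P).

Lemma preadj_hom_inhabited (A B : Ob D) :
  inhabited (Hom A B) -> inhabited (Hom (F A) (F B)).
Proof.
intros [f].
destruct (paPA C D P (F B) B A (idm (F B)) f) as [v _].
exact (inhabits v).
Qed.

Lemma preadj_arrows (k : nat) (A B : Ob D) (X : Ob C) :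
  arrows C k (F A) (F B) X -> arrows D k A B (G X).
Proof.
intros HX chi Hchi.
destruct (HX (fun g => chi (Phi A X g)) (fun g => Hchi _))
  as [i [Hi [w Hw]]].
exists i; split; [exact Hi |].
exists (Phi B X w); intros f.
destruct (paPA C D P X B A w f) as [v ->].
apply Hw.
Qed.

End PreAdjunctionRamsey.

Theorem theorem3p2 (C D : Category) (P : PreAdjunction C D) :
  RamseyProperty C -> RamseyProperty D.
Proof.
intros HC k Hk A B HAB.
destruct (HC k Hk _ _ (preadj_hom_inhabited C D P A B HAB)) as [X HX].
exists (paG C D P X).
exact (preadj_arrows C D P k A B X HX).
Qed.
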